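(* Let $G$ and $H$ be nontrivial finite connected simple graphs and let $\ell\geq 2$ be an integer. (1) If $S$ is an $\{\ell\}$-resolving set of $G\Box H$, then the projection of $S$ onto $G$ is an $\{\ell\}$-resolving set of $G$ and the projection of $S$ onto $H$ is an $\{\ell\}$-resolving set of $H$. (2) If $S$ is an $\{\ell\}$-resolving set of $G$ and $S'$ is an $\ell$-solid-resolving set of $H$, then $S\times S'=\{ss': s\in S, s'\in S'\}$ is an $\{\ell\}$-resolving set of $G\Box H$; symmetrically, if $S$ is an $\{\ell\}$-resolving set of $H$ and $S'$ is an $\ell$-solid-resolving set of $G$, then $S'\times S$ is an $\{\ell\}$-resolving set of $G\Box H$. (3) $\max\{\beta_\ell(G),\beta_\ell(H)\}\leq\beta_\ell(G\Box H)\leq\min\{\beta_\ell(G)\cdot\beta_\ell^s(H),\ \beta_\ell^s(G)\cdot\beta_\ell(H)\}$.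
   Context: The Cartesian product $G\Box H$ has vertex set $\{av: a\in V(G), v\in V(H)\}$, with distinct $av,bu$ adjacent iff ($a=b$ and $uv\in E(H)$) or ($ab\in E(G)$ and $u=v$). The projection of $X\subseteq V(G\Box H)$ onto $G$ is $\{x_1: x_1x_2\in X\}$, and onto $H$ is $\{x_2: x_1x_2\in X\}$. For a graph, $d$ is the shortest-path distance, $d(s,X)=\min_{x\in X}d(s,x)$ for nonempty $X$, and $\mathcal{D}_S(X)=(d(s_1,X),\dots,d(s_k,X))$ for $S=\{s_1,\dots,s_k\}$. $S$ is an $\{\ell\}$-resolving set if $\mathcal{D}_S(X)\neq\mathcal{D}_S(Y)$ for all distinct nonempty vertex sets $X,Y$ with $|X|,|Y|\leq\ell$; $S$ is an $\ell$-solid-resolving set if $\mathcal{D}_S(X)\neq\mathcal{D}_S(Y)$ for all distinct nonempty vertex sets $X,Y$ with $|X|\leq\ell$ ($Y$ arbitrary). $\beta_\ell$ and $\beta_\ell^s$ are the minimum sizes of such sets. *)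

From mathcomp Require Import all_boot.
Set Implicit Arguments. Unset Strict Implicit. Unset Printing Implicit Defensive.

Section Graphs.
Variable T : finType.
Variable e : rel T.

Definition simple_graph : Prop := symmetric e /\ irreflexive e.
Definition gconnected : Prop := forall x y : T, connect e x y.

Definition ball (x : T) (n : nat) : {set T} :=
  iter n (fun B : {set T} => B :|: [set y | [exists z in B, e z y]]) [set x].

(* shortest-path distance: least n with y in ball x n (#|T| if unreachable,
   which never happens in a connected graph) *)
Definition dist (x y : T) : nat :=
  find (fun n => y \in ball x n) (iota 0 #|T|).

(* d(s, X) = min_{x in X} d(s, x), for nonempty X *)
Definition dist_set (s : T) (X : {set T}) : nat :=
  \big[minn/#|T|]_(x in X) dist s x.

Definition separates (S X Y : {set T}) : bool :=
  [exists s in S, dist_set s X != dist_set s Y].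

Definition lresolving (l : nat) (S : {set T}) : bool :=
  [forall X : {set T}, [forall Y : {set T},
    [&& X != set0, Y != set0, X != Y, #|X| <= l & #|Y| <= l] ==> separates S X Y]].

Definition lsolid (l : nat) (S : {set T}) : bool :=
  [forall X : {set T}, [forall Y : {set T},
    [&& X != set0, Y != set0, X != Y & #|X| <= l] ==> separates S X Y]].

(* beta_l and beta_l^s: minimum sizes (the whole vertex set is always such a set) *)
Definition beta (l : nat) : nat :=
  \big[minn/#|T|.+1]_(S : {set T} | lresolving l S) #|S|.
Definition beta_s (l : nat) : nat :=
  \big[minn/#|T|.+1]_(S : {set T} | lsolid l S) #|S|.
End Graphs.

Definition cartprod (T1 T2 : finType) (e1 : rel T1) (e2 : rel T2) : rel (T1 * T2) :=
  fun x y => ((x.1 == y.1) && e2 x.2 y.2) || (e1 x.1 y.1 && (x.2 == y.2)).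

Definition proj1s (T1 T2 : finType) (S : {set T1 * T2}) : {set T1} := [set x.1 | x in S].
Definition proj2s (T1 T2 : finType) (S : {set T1 * T2}) : {set T2} := [set x.2 | x in S].

From mathcomp Require Import all_boot all_order.
Import Order.TTheory.

Set Implicit Arguments.
Unset Strict Implicit.
Unset Printing Implicit Defensive.

(* Distances in G □ H add up: d((a,u),(b,v)) = d(a,b) + d(u,v), hence
   d((s,s'), X × Y) = d(s,X) + d(s',Y); testing a resolving set of G □ H on the
   sets X × {v} shows that its projection onto G is resolving.
   For S × S' and X ≠ Y in G □ H with |X|, |Y| ≤ ℓ it suffices to find (a,b) in
   Y \ X and (s,s') in S × S' such that s is strictly closer to a than to the
   other first coordinates of X and s' strictly closer to b than to the other
   second coordinates of X: then (s,s') is strictly closer to (a,b) than to X.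
   Such an s' exists because S' is ℓ-solid: it separates the at most ℓ other
   second coordinates B from B ∪ {b}.  If the first projections of X and Y
   differ, S separates them and a is a point of the projection of Y nearest to
   the separating s; otherwise a comes from any point of Y \ X, and S separates
   the at most ℓ - 1 other first coordinates A of X from A ∪ {a}.
   The mirrored statement follows through the isometry (a,u) ↦ (u,a), and the
   bounds on β_ℓ from both parts applied to sets of minimum size. *)

Lemma bigminn_le (I : finType) (P : pred I) (F : I -> nat) d i :
  P i -> \big[minn/d]_(j | P j) F j <= F i.
Proof. by move=> Pi; rewrite -minEnat -leEnat; apply: bigmin_le_cond. Qed.

Lemma bigminn_attained (I : finType) (P : pred I) (F : I -> nat) d i :
  P i -> (forall j, P j -> F j <= d) ->
  exists2 j, P j & \big[minn/d]_(k | P k) F k = F j.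
Proof.
move=> Pi F_le; rewrite -minEnat.
by have [j Pj ->] := eq_bigmin (x := d) i P F Pi F_le; exists j.
Qed.

Section Balls.
Variables (T : finType) (e : rel T).

Lemma ball0 x : ball e x 0 = [set x].
Proof. by []. Qed.

Lemma in_ballS x n y :
  (y \in ball e x n.+1) = (y \in ball e x n) || [exists z in ball e x n, e z y].
Proof. by rewrite /ball iterS !inE. Qed.

Lemma subset_ball x m n : m <= n -> ball e x m \subset ball e x n.
Proof.
elim: n => [|n IHn]; first by rewrite leqn0 => /eqP->.
rewrite leq_eqVlt ltnS => /predU1P[-> // | /IHn sub].
by apply: subset_trans sub _; apply/subsetP => y; rewrite in_ballS => ->.
Qed.

Lemma ball_trans x y z i j :
  y \in ball e x i -> z \in ball e y j -> z \in ball e x (i + j).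
Proof.
move=> xy; elim: j z => [|j IHj] z; first by rewrite ball0 inE addn0 => /eqP->.
rewrite addnS !in_ballS => /orP[/IHj -> // | /existsP[w /andP[/IHj xw wz]]].
by apply/orP; right; apply/existsP; exists w; rewrite xw.
Qed.

Lemma ball_path x p : path e x p -> last x p \in ball e x (size p).
Proof.
elim: p x => [|y p IHp] x; first by rewrite ball0 inE.
move=> /andP[xy /IHp y_p]; apply: (ball_trans (i := 1) _ y_p).
by rewrite in_ballS; apply/orP; right; apply/existsP; exists x; rewrite ball0 !inE eqxx.
Qed.

Lemma ball_connect x y n : y \in ball e x n -> connect e x y.
Proof.
elim: n y => [|n IHn] y; first by rewrite ball0 inE => /eqP->.
rewrite in_ballS => /orP[/IHn // | /existsP[z /andP[/IHn xz zy]]].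
exact: connect_trans xz (connect1 zy).
Qed.

Lemma connect_ball x y : connect e x y -> y \in ball e x #|T|.-1.
Proof.
case/connectP => p /shortenP[q q_path q_uniq _] ->.
apply: (subsetP (subset_ball x _)) _ (ball_path q_path).
have /card_uniqP card_q := q_uniq.
by rewrite -ltnS (leq_trans _ (leqSpred _)) // -[(size q).+1]/(size (x :: q)) -card_q max_card.
Qed.

End Balls.

Lemma ball_homo (T T' : finType) (e : rel T) (e' : rel T') (f : T -> T') :
  {homo f : x y / e x y >-> e' x y} ->
  forall x y n, y \in ball e x n -> f y \in ball e' (f x) n.
Proof.
move=> f_homo x y n; elim: n y => [|n IHn] y; first by rewrite !ball0 !inE => /eqP->.
rewrite !in_ballS => /orP[/IHn -> // | /existsP[z /andP[/IHn xz zy]]].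
by apply/orP; right; apply/existsP; exists (f z); rewrite xz f_homo.
Qed.

Section Distance.
Variables (T : finType) (e : rel T).

Lemma dist_le_card x y : dist e x y <= #|T|.
Proof. by rewrite -[leqRHS](size_iota 0) find_size. Qed.

Lemma dist_eq0 x y : (dist e x y == 0) = (x == y).
Proof.
have : 0 < #|T| by apply/card_gt0P; exists x.
rewrite /dist; case: #|T| => // n _ /=.
by rewrite in_set1 [y == x]eq_sym; case: (x == y).
Qed.

Lemma distxx x : dist e x x = 0.
Proof. by apply/eqP; rewrite dist_eq0. Qed.

Lemma dist_le x y n : connect e x y -> (dist e x y <= n) = (y \in ball e x n).
Proof.
move=> /connect_ball y_far.
have T_gt0 : 0 < #|T| by apply/card_gt0P; exists x.
have has_y : has (fun k => y \in ball e x k) (iota 0 #|T|).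
  by apply/hasP; exists #|T|.-1; rewrite // mem_iota add0n ltn_predL.
have dist_lt : dist e x y < #|T| by rewrite -[ltnRHS](size_iota 0) -has_find.
have y_dist : y \in ball e x (dist e x y).
  by have := nth_find 0 has_y; rewrite nth_iota.
apply/idP/idP => [le_dn | y_n]; first exact: (subsetP (subset_ball e x le_dn)).
rewrite leqNgt; apply/negP => lt_nd.
by have := before_find 0 lt_nd; rewrite nth_iota ?y_n // (ltn_trans lt_nd).
Qed.

Lemma mem_ball_dist x y : connect e x y -> y \in ball e x (dist e x y).
Proof. by move=> xy; rewrite -dist_le. Qed.

Lemma dist_edge x y z : connect e x y -> e y z -> dist e x z <= (dist e x y).+1.
Proof.
move=> xy yz; rewrite dist_le ?(connect_trans xy (connect1 yz)) // in_ballS.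
by apply/orP; right; apply/existsP; exists y; rewrite mem_ball_dist.
Qed.

Lemma dist_set_le s (X : {set T}) x : x \in X -> dist_set e s X <= dist e s x.
Proof. exact: (bigminn_le (P := mem X)). Qed.

Lemma dist_set_attained s (X : {set T}) :
  X != set0 -> exists2 x, x \in X & dist_set e s X = dist e s x.
Proof.
case/set0Pn => x0 x0X.
exact: (bigminn_attained (P := mem X) x0X (fun x _ => dist_le_card s x)).
Qed.

Lemma dist_set_min s (X : {set T}) x :
  x \in X -> {in X, forall y, dist e s x <= dist e s y} -> dist_set e s X = dist e s x.
Proof.
move=> xX x_min; apply/eqP; rewrite eqn_leq dist_set_le //=.
by rewrite /dist_set -minEnat -leEnat; apply: le_bigmin; [exact: dist_le_card | exact: x_min].
Qed.

Lemma dist_set_setU1 s (A : {set T}) a x :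
  x \in A -> dist e s x <= dist e s a -> dist_set e s (a |: A) = dist_set e s A.
Proof.
move=> xA xa; have [|y yA dsy] := dist_set_attained s (X := A).
  by apply/set0Pn; exists x.
rewrite dsy; apply: dist_set_min => [|z]; first by rewrite setU1r.
rewrite -dsy in_setU1 => /predU1P[-> | zA]; last exact: dist_set_le.
exact: leq_trans (dist_set_le s xA) xa.
Qed.

End Distance.

Section Resolving.
Variables (T : finType) (e : rel T).

Lemma separatesC (S X Y : {set T}) : separates e S X Y = separates e S Y X.
Proof. by apply/existsP/existsP => -[s /andP[sS ds]]; exists s; rewrite sS eq_sym. Qed.

Lemma separates_at (S X Y : {set T}) s p :
  s \in S -> X != set0 -> p \in Y -> {in X, forall q, dist e s p < dist e s q} ->
  separates e S X Y.
Proof.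
move=> sS X0 pY p_near; apply/existsP; exists s; rewrite sS /=.
have [x xX ->] := dist_set_attained e s X0.
by rewrite neq_ltn (leq_ltn_trans (dist_set_le e s pY) (p_near x xX)) orbT.
Qed.

Lemma separates_setU1 (S A : {set T}) a :
  separates e S A (a |: A) -> exists2 s, s \in S & {in A, forall x, dist e s a < dist e s x}.
Proof.
case/existsP => s /andP[sS ds]; exists s => // x xA; rewrite ltnNge.
by apply: contra ds => xa; rewrite (dist_set_setU1 xA xa).
Qed.

Lemma lresolvingP l (S : {set T}) :
  reflect (forall X Y : {set T}, X != set0 -> Y != set0 -> X != Y ->
             #|X| <= l -> #|Y| <= l -> separates e S X Y)
          (lresolving e l S).
Proof.
apply: (iffP forallP) => [resS X Y X0 Y0 XY Xl Yl | resS X].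
  by move: (resS X) => /forallP/(_ Y)/implyP; apply; rewrite X0 Y0 XY Xl Yl.
by apply/forallP => Y; apply/implyP => /and5P[]; apply: resS.
Qed.

Lemma lsolidP l (S : {set T}) :
  reflect (forall X Y : {set T}, X != set0 -> Y != set0 -> X != Y ->
             #|X| <= l -> separates e S X Y)
          (lsolid e l S).
Proof.
apply: (iffP forallP) => [solS X Y X0 Y0 XY Xl | solS X].
  by move: (solS X) => /forallP/(_ Y)/implyP; apply; rewrite X0 Y0 XY Xl.
by apply/forallP => Y; apply/implyP => /and4P[]; apply: solS.
Qed.

Lemma lsolid_lresolving l (S : {set T}) : lsolid e l S -> lresolving e l S.
Proof. by move=> /lsolidP solS; apply/lresolvingP => X Y X0 Y0 XY Xl _; apply: solS. Qed.

Lemma lresolving_neq0 l (S : {set T}) :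
  1 < #|T| -> 0 < l -> lresolving e l S -> S != set0.
Proof.
case/card_gt1P => x [y [_ _ xy]] l_gt0 /lresolvingP resS.
have set1_neq0 (z : T) : [set z] != set0 by apply/set0Pn; exists z; rewrite inE.
have /existsP[s /andP[sS _]] : separates e S [set x] [set y].
  apply: resS; rewrite ?set1_neq0 ?cards1 //.
  by apply: contra xy => /eqP/set1_inj ->.
by apply/set0Pn; exists s.
Qed.

Lemma lsolid_setT l : lsolid e l [set: T].
Proof.
have sep_at (X Y : {set T}) p : X != set0 -> p \in Y -> p \notin X -> separates e setT X Y.
  move=> X0 pY pX; apply: separates_at (in_setT p) X0 pY _ => q qX.
  by rewrite distxx lt0n dist_eq0; apply: contraNneq pX => ->.
apply/lsolidP => X Y X0 Y0 XY _.
have [YX | /subsetPn[p pY pX]] := boolP (Y \subset X); last exact: sep_at pY pX.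
have /subsetPn[p pX pY] : ~~ (X \subset Y) by apply: contra XY => XY'; rewrite eqEsubset XY'.
by rewrite separatesC; apply: sep_at pX pY.
Qed.

Lemma lresolving_closest l (S A : {set T}) a :
  lresolving e l S -> S != set0 -> #|A :\ a| < l ->
  exists2 s, s \in S & {in A :\ a, forall x, dist e s a < dist e s x}.
Proof.
move=> /lresolvingP resS /set0Pn[s0 s0S] small.
have [-> | A0] := eqVneq (A :\ a) set0; first by exists s0 => // x; rewrite inE.
apply/separates_setU1/resS => //; last by rewrite cardsU1 setD11.
- by apply/set0Pn; exists a; rewrite setU11.
- by apply/eqP => /setP/(_ a); rewrite setU11 setD11.
- exact: ltnW.
Qed.

Lemma lsolid_closest l (S A : {set T}) a :
  lsolid e l S -> S != set0 -> #|A :\ a| <= l ->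
  exists2 s, s \in S & {in A :\ a, forall x, dist e s a < dist e s x}.
Proof.
move=> /lsolidP solS /set0Pn[s0 s0S] small.
have [-> | A0] := eqVneq (A :\ a) set0; first by exists s0 => // x; rewrite inE.
apply/separates_setU1/solS => //.
- by apply/set0Pn; exists a; rewrite setU11.
- by apply/eqP => /setP/(_ a); rewrite setU11 setD11.
Qed.

End Resolving.

Section Isometry.
Variables (T T' : finType) (e : rel T) (e' : rel T') (f : T -> T').
Hypothesis f_bij : bijective f.
Hypothesis f_dist : forall x y, dist e' (f x) (f y) = dist e x y.

Lemma dist_set_isometry s (X : {set T}) : dist_set e' (f s) (f @: X) = dist_set e s X.
Proof.
have [-> | X0] := eqVneq X set0.
  by rewrite imset0 /dist_set !big_set0 (bij_eq_card f_bij).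
have [x xX dsx] := dist_set_attained e s X0.
rewrite dsx -f_dist; apply: dist_set_min => [|_ /imsetP[y yX ->]]; first exact: imset_f.
by rewrite !f_dist -dsx dist_set_le.
Qed.

Lemma lresolving_isometry l (S : {set T}) : lresolving e l S -> lresolving e' l (f @: S).
Proof.
case: f_bij => g fK gK; have g_inj : injective g by apply: can_inj gK.
have fgK (A : {set T'}) : f @: (g @: A) = A.
  by rewrite -imset_comp (eq_imset _ gK) imset_id.
move=> /lresolvingP resS; apply/lresolvingP => X Y X0 Y0 XY Xl Yl.
have /existsP[s /andP[sS ds]] : separates e S (g @: X) (g @: Y).
  apply: resS; rewrite ?imset_eq0 ?card_imset //.
  by apply: contra XY => /eqP gXY; rewrite -(fgK X) gXY fgK.
apply/existsP; exists (f s); rewrite imset_f //=.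
by rewrite -(fgK X) -(fgK Y) !dist_set_isometry.
Qed.

End Isometry.

Section CartesianProduct.
Variables (T1 T2 : finType) (e1 : rel T1) (e2 : rel T2).
Local Notation eP := (cartprod e1 e2).

Lemma ball_cartprod a u b v i j :
  b \in ball e1 a i -> v \in ball e2 u j -> (b, v) \in ball eP (a, u) (i + j).
Proof.
move=> ab uv.
have bu : (b, u) \in ball eP (a, u) i.
  by apply: (ball_homo (f := fun c => (c, u))) ab => c d cd; rewrite /cartprod /= cd eqxx orbT.
have bv : (b, v) \in ball eP (b, u) j.
  by apply: (ball_homo (f := pair b)) uv => w z wz; rewrite /cartprod /= eqxx wz.
exact: ball_trans bu bv.
Qed.

Hypotheses (conn1 : gconnected e1) (conn2 : gconnected e2).

Lemma gconnected_cartprod : gconnected eP.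
Proof.
move=> [a u] [b v].
exact: ball_connect (ball_cartprod (mem_ball_dist (conn1 a b)) (mem_ball_dist (conn2 u v))).
Qed.

Lemma ball_cartprod_dist a u b v n :
  (b, v) \in ball eP (a, u) n -> dist e1 a b + dist e2 u v <= n.
Proof.
elim: n b v => [|n IHn] b v; first by rewrite ball0 inE => /eqP[-> ->]; rewrite !distxx.
rewrite in_ballS => /orP[/IHn/leqW // | /existsP[[c w] /andP[/IHn le_n]]].
rewrite /cartprod /= => /orP[/andP[/eqP<- wv] | /andP[cb /eqP<-]].
  apply: leq_trans (leq_add (leqnn _) (dist_edge (conn2 u w) wv)) _.
  by rewrite addnS ltnS.
apply: leq_trans (leq_add (dist_edge (conn1 a c) cb) (leqnn _)) _.
by rewrite addSn ltnS.
Qed.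

Lemma dist_cartprod a u b v : dist eP (a, u) (b, v) = dist e1 a b + dist e2 u v.
Proof.
have connP := gconnected_cartprod (a, u) (b, v).
apply/eqP; rewrite eqn_leq ball_cartprod_dist ?mem_ball_dist // andbT.
by rewrite (dist_le _ connP) ball_cartprod ?mem_ball_dist.
Qed.

Lemma dist_setX s1 s2 (X : {set T1}) (Y : {set T2}) :
  X != set0 -> Y != set0 ->
  dist_set eP (s1, s2) (setX X Y) = dist_set e1 s1 X + dist_set e2 s2 Y.
Proof.
move=> X0 Y0; have [x xX dsx] := dist_set_attained e1 s1 X0.
have [y yY dsy] := dist_set_attained e2 s2 Y0.
rewrite dsx dsy -dist_cartprod; apply: dist_set_min => [|[x' y']].
  by rewrite in_setX xX yY.
rewrite in_setX => /andP[x'X y'Y]; rewrite !dist_cartprod -dsx -dsy.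
by rewrite leq_add ?dist_set_le.
Qed.

Lemma separates_setX_at (S : {set T1}) (S' : {set T2}) (X Y : {set T1 * T2}) a b s s' :
  s \in S -> s' \in S' -> X != set0 -> (a, b) \in Y -> (a, b) \notin X ->
  {in proj1s X :\ a, forall x, dist e1 s a < dist e1 s x} ->
  {in proj2s X :\ b, forall v, dist e2 s' b < dist e2 s' v} ->
  separates eP (setX S S') X Y.
Proof.
move=> sS s'S' X0 abY abX near_a near_b.
apply: (separates_at (s := (s, s')) _ X0 abY); first by rewrite in_setX sS s'S'.
move=> [x v] xvX; rewrite !dist_cartprod.
have xX : x \in proj1s X by apply: (imset_f (fun p => p.1) xvX).
have vX : v \in proj2s X by apply: (imset_f (fun p => p.2) xvX).
have [xa | xa] := eqVneq x a.
  subst x; rewrite ltn_add2l near_b // in_setD1 vX andbT.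
  by apply: contraNneq abX => <-.
have le_b : dist e2 s' b <= dist e2 s' v.
  have [-> // | vb] := eqVneq v b.
  by apply/ltnW/near_b; rewrite in_setD1 vb vX.
by rewrite -addSn leq_add // near_a // in_setD1 xa xX.
Qed.

End CartesianProduct.

Section ProductResolving.
Variables (T1 T2 : finType) (e1 : rel T1) (e2 : rel T2) (l : nat).
Hypotheses (conn1 : gconnected e1) (conn2 : gconnected e2).
Local Notation eP := (cartprod e1 e2).

Lemma lresolving_proj1 (v : T2) (S : {set T1 * T2}) :
  lresolving eP l S -> lresolving e1 l (proj1s S).
Proof.
move=> /lresolvingP resS; apply/lresolvingP => X Y X0 Y0 XY Xl Yl.
have v0 : [set v] != set0 by apply/set0Pn; exists v; rewrite set11.
have Xv0 (Z : {set T1}) : Z != set0 -> setX Z [set v] != set0.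
  by rewrite -!card_gt0 cardsX cards1 muln1.
have /existsP[[s1 s2] /andP[sS ds]] : separates eP S (setX X [set v]) (setX Y [set v]).
  apply: resS; rewrite ?Xv0 ?cardsX ?cards1 ?muln1 //.
  apply: contra XY => /eqP XvYv; apply/eqP/setP => x.
  by move: XvYv => /setP/(_ (x, v)); rewrite !in_setX inE eqxx !andbT.
apply/existsP; exists s1; rewrite (imset_f (fun p => p.1) sS) /=.
by apply: contra ds; rewrite !dist_setX // => /eqP->.
Qed.

Variables (S : {set T1}) (S' : {set T2}).
Hypotheses (T1_gt1 : 1 < #|T1|) (T2_gt1 : 1 < #|T2|) (l_gt0 : 0 < l).
Hypotheses (resS : lresolving e1 l S) (solS' : lsolid e2 l S').

Let S0 : S != set0 := lresolving_neq0 T1_gt1 l_gt0 resS.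
Let S'0 : S' != set0 := lresolving_neq0 T2_gt1 l_gt0 (lsolid_lresolving solS').

Lemma closest_proj2 (X : {set T1 * T2}) b :
  #|X| <= l -> exists2 s', s' \in S' & {in proj2s X :\ b, forall v, dist e2 s' b < dist e2 s' v}.
Proof.
move=> Xl; apply: lsolid_closest solS' S'0 _.
exact: leq_trans (subset_leq_card (subD1set _ _)) (leq_trans (leq_imset_card _ _) Xl).
Qed.

Lemma separates_setX_same_proj1 (X Y : {set T1 * T2}) a b :
  X != set0 -> #|X| <= l -> proj1s X = proj1s Y -> (a, b) \in Y -> (a, b) \notin X ->
  separates eP (setX S S') X Y.
Proof.
move=> X0 Xl XY abY abX.
have aX : a \in proj1s X by rewrite XY; apply: (imset_f (fun p => p.1) abY).
have [s sS near_a] : exists2 s, s \in S & {in proj1s X :\ a, forall x, dist e1 s a < dist e1 s x}.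
  apply: lresolving_closest resS S0 _.
  apply: leq_trans _ (leq_trans (leq_imset_card (fun p : T1 * T2 => p.1) X) Xl).
  by rewrite (cardsD1 a (proj1s X)) aX.
have [s' s'S' near_b] := closest_proj2 b Xl.
exact: (separates_setX_at conn1 conn2 sS s'S' X0 abY abX near_a near_b).
Qed.

Lemma separates_setX_lt_proj1 (X Y : {set T1 * T2}) s :
  s \in S -> X != set0 -> Y != set0 -> #|X| <= l ->
  dist_set e1 s (proj1s Y) < dist_set e1 s (proj1s X) -> separates eP (setX S S') X Y.
Proof.
move=> sS X0 Y0 Xl lt_YX.
have [_ /imsetP[[a b] abY ->] /= dsa] :
    exists2 a, a \in proj1s Y & dist_set e1 s (proj1s Y) = dist e1 s a.
  by apply: dist_set_attained; rewrite imset_eq0.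
have near_a : {in proj1s X, forall x, dist e1 s a < dist e1 s x}.
  by move=> x xX; rewrite -dsa (leq_trans lt_YX (dist_set_le e1 s xX)).
have abX : (a, b) \notin X.
  by apply/negP => /(imset_f (fun p : T1 * T2 => p.1)) /near_a; rewrite ltnn.
have [s' s'S' near_b] := closest_proj2 b Xl.
apply: (separates_setX_at conn1 conn2 sS s'S' X0 abY abX _ near_b) => x.
by rewrite in_setD1 => /andP[_ /near_a].
Qed.

Lemma lresolving_setX : lresolving eP l (setX S S').
Proof.
apply/lresolvingP => X Y X0 Y0 XY Xl Yl.
have [XY1 | XY1] := eqVneq (proj1s X) (proj1s Y).
  have [YX | /subsetPn[[a b] abY abX]] := boolP (Y \subset X); last first.
    exact: separates_setX_same_proj1 X0 Xl XY1 abY abX.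
  have /subsetPn[[a b] abX abY] : ~~ (X \subset Y).
    by apply: contra XY => XY'; rewrite eqEsubset XY'.
  by rewrite separatesC; apply: separates_setX_same_proj1 Y0 Yl (esym XY1) abX abY.
have /existsP[s /andP[sS ds]] : separates e1 S (proj1s X) (proj1s Y).
  apply: (lresolvingP _ _ _ resS); rewrite ?imset_eq0 //.
  - exact: leq_trans (leq_imset_card _ _) Xl.
  - exact: leq_trans (leq_imset_card _ _) Yl.
case: ltngtP ds => // [lt_XY | lt_YX] _.
  by rewrite separatesC; apply: separates_setX_lt_proj1 sS Y0 X0 Yl lt_XY.
exact: separates_setX_lt_proj1 sS X0 Y0 Xl lt_YX.
Qed.

End ProductResolving.

Lemma imset_swap_pair_setX (T1 T2 : finType) (A : {set T1}) (B : {set T2}) :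
  swap_pair @: setX A B = setX B A.
Proof.
apply/setP => -[b a]; rewrite in_setX; apply/imsetP/andP => [[[a' b']] | [bB aA]].
  by rewrite in_setX => /andP[aA bB] [-> ->].
by exists (a, b); rewrite // in_setX aA bB.
Qed.

Lemma lresolving_swap (T1 T2 : finType) (e1 : rel T1) (e2 : rel T2) l (S : {set T1 * T2}) :
  gconnected e1 -> gconnected e2 ->
  lresolving (cartprod e1 e2) l S -> lresolving (cartprod e2 e1) l (swap_pair @: S).
Proof.
move=> conn1 conn2; apply: lresolving_isometry; first by exists swap_pair; apply: swap_pairK.
by move=> [a u] [b v]; rewrite /swap_pair /= !dist_cartprod // addnC.
Qed.

Lemma lresolving_proj2 (T1 T2 : finType) (e1 : rel T1) (e2 : rel T2) l (u : T1)
    (S : {set T1 * T2}) :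
  gconnected e1 -> gconnected e2 -> lresolving (cartprod e1 e2) l S -> lresolving e2 l (proj2s S).
Proof.
move=> conn1 conn2 /(lresolving_swap conn1 conn2) /(lresolving_proj1 conn2 conn1 u).
by rewrite /proj1s -imset_comp.
Qed.

Section Beta.
Variables (T : finType) (e : rel T) (l : nat).

Lemma beta_le (S : {set T}) : lresolving e l S -> beta e l <= #|S|.
Proof. exact: (bigminn_le (P := lresolving e l)). Qed.

Lemma beta_attained : exists2 S, lresolving e l S & beta e l = #|S|.
Proof.
apply: (bigminn_attained (i := setT)) => [|S _]; last exact/leqW/max_card.
exact/lsolid_lresolving/lsolid_setT.
Qed.

Lemma beta_s_attained : exists2 S, lsolid e l S & beta_s e l = #|S|.
Proof.
apply: (bigminn_attained (i := setT)) => [|S _]; last exact/leqW/max_card.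
exact: lsolid_setT.
Qed.

End Beta.

Theorem mainTheorem9 (T1 T2 : finType) (e1 : rel T1) (e2 : rel T2) (l : nat) :
  simple_graph e1 -> simple_graph e2 -> gconnected e1 -> gconnected e2 ->
  1 < #|T1| -> 1 < #|T2| -> 2 <= l ->
  [/\ (forall S : {set T1 * T2}, lresolving (cartprod e1 e2) l S ->
          lresolving e1 l (proj1s S) /\ lresolving e2 l (proj2s S)),
      (forall (S : {set T1}) (S' : {set T2}),
          lresolving e1 l S -> lsolid e2 l S' -> lresolving (cartprod e1 e2) l (setX S S')),
      (forall (S : {set T2}) (S' : {set T1}),
          lresolving e2 l S -> lsolid e1 l S' -> lresolving (cartprod e1 e2) l (setX S' S))
    & maxn (beta e1 l) (beta e2 l) <= beta (cartprod e1 e2) l /\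
      beta (cartprod e1 e2) l <= minn (beta e1 l * beta_s e2 l) (beta_s e1 l * beta e2 l)].
Proof.
move=> _ _ conn1 conn2 T1_gt1 T2_gt1 l_ge2.
have l_gt0 : 0 < l by apply: leq_trans l_ge2.
have /card_gt0P[u _] := ltnW T1_gt1; have /card_gt0P[v _] := ltnW T2_gt1.
have proj S (resS : lresolving (cartprod e1 e2) l S) :
    lresolving e1 l (proj1s S) /\ lresolving e2 l (proj2s S).
  by split; [apply: (lresolving_proj1 conn1 conn2 v) | apply: (lresolving_proj2 u conn1 conn2)].
have prod12 S S' : lresolving e1 l S -> lsolid e2 l S' -> lresolving (cartprod e1 e2) l (setX S S').
  exact: (lresolving_setX conn1 conn2 T1_gt1 T2_gt1 l_gt0).
have prod21 S S' : lresolving e2 l S -> lsolid e1 l S' -> lresolving (cartprod e1 e2) l (setX S' S).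
  move=> resS solS'; rewrite -imset_swap_pair_setX; apply: (lresolving_swap conn2 conn1).
  exact: (lresolving_setX conn2 conn1 T2_gt1 T1_gt1 l_gt0 resS solS').
split=> //; split.
  have [S resS ->] := beta_attained (cartprod e1 e2) l; have [res1 res2] := proj S resS.
  rewrite geq_max (leq_trans (beta_le res1) (leq_imset_card _ _)).
  exact: leq_trans (beta_le res2) (leq_imset_card _ _).
have [S1 res1 ->] := beta_attained e1 l; have [S2 res2 ->] := beta_attained e2 l.
have [Q1 sol1 ->] := beta_s_attained e1 l; have [Q2 sol2 ->] := beta_s_attained e2 l.
rewrite leq_min -!cardsX; apply/andP; split; apply: beta_le; [exact: prod12 | exact: prod21].
Qed.
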